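(* For every integer $n\ge0$, the Hankel determinants $D_0(n,s,q)=\det\big(F(2i+2j,s,q)\big)_{i,j=0}^n$ and $D_1(n,s,q)=\det\big(F(2i+2j+1,s,q)\big)_{i,j=0}^n$ satisfy $$D_0(n,s,q)=D_0(n,0,q)\prod_{j=0}^n\Big((s-q^{2j})(s-q^{2j+1})\Big(s-\frac{1}{q^{2j}}\Big)\Big(s-\frac{1}{q^{2j+1}}\Big)\Big)^{n-j},$$ $$D_1(n,s,q)=D_1(n,0,q)\,(1-s)^{n+1}\prod_{j=0}^n\Big((s-q^{2j+2})(s-q^{2j+1})\Big(s-\frac{1}{q^{2j+2}}\Big)\Big(s-\frac{1}{q^{2j+1}}\Big)\Big)^{n-j}.$$
   Context: $q,s$ are indeterminates. $(x;q)_n=\prod_{j=0}^{n-1}(1-q^jx)$. The Gaussian binomial coefficient is $\begin{bmatrix} n\\ j\end{bmatrix}_q=\frac{(q;q)_n}{(q;q)_j(q;q)_{n-j}}$ for $0\le j\le n$ and $0$ otherwise. $F(n,s,q)=\dfrac{\sum_{j=0}^n(-s)^j\begin{bmatrix} n\\ j\end{bmatrix}_{q}}{(q;q^2)_{\lfloor (n+1)/2\rfloor}}$. $D_0(n,0,q)$ and $D_1(n,0,q)$ denote the respective determinants at $s=0$. *)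

From HB Require Import structures.
From mathcomp Require Import all_boot all_order all_algebra.
Set Implicit Arguments. Unset Strict Implicit. Unset Printing Implicit Defensive.
Import Order.TTheory GRing.Theory Num.Theory.
Local Open Scope ring_scope.

Section Defs.
Variable K : fieldType.

Definition qpoch (x q : K) (n : nat) : K := \prod_(j < n) (1 - q ^+ j * x).

Definition qbinom (q : K) (n j : nat) : K :=
  if (j <= n)%N then qpoch q q n / (qpoch q q j * qpoch q q (n - j)) else 0.

Definition Ffun (n : nat) (s q : K) : K :=
  (\sum_(j < n.+1) (- s) ^+ j * qbinom q n j) / qpoch q (q ^+ 2) (n.+1)./2.

Definition D0 (n : nat) (s q : K) : K :=
  \det (\matrix_(i < n.+1, j < n.+1) Ffun (2 * i + 2 * j) s q).
Definition D1 (n : nat) (s q : K) : K :=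
  \det (\matrix_(i < n.+1, j < n.+1) Ffun (2 * i + 2 * j + 1) s q).
End Defs.

(* The field Q(q)(s) of rational functions in two indeterminates q, s. *)
Definition Kq : fieldType := {fraction {poly rat}}.
Definition Kqs : fieldType := {fraction {poly Kq}}.
Definition qvar : Kqs := tofrac (polyC (tofrac ('X : {poly rat}) : Kq)).
Definition svar : Kqs := tofrac ('X : {poly Kq}).

(* Expanding (-s)^l in the q-falling factorials prod_{k<i} (s - q^k) and
   evaluating Gauss's alternating sum of Gaussian coefficients writes
   F(2r,s,q) and F(2r+1,s,q)/(1-s) as the moments L(x^r) of linear
   functionals L that are explicit on the basis P_a = prod_{k<a} (x - q^(2k)).
   Expanding x^r also in the basis Q_b = prod_{k<b} (x - s^2 q^(2k)) factors
   each Hankel matrix as A M B^T with A, B unitriangular and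
   M_{ab} = L(P_a Q_b).  These entries obey the recurrence
   M_{a+1,b} = M_{a,b+1} + (s^2 q^(2b) - q^(2a)) M_{ab}, whose solution is
   c_{ab} N_a(s) V_b(s), where N_a(s) = prod_{t<2a} (s - q^(t+e)),
   V_b(s) = prod_{t<2b} (s - q^-(t+e)) (e = 0 or 1 is the parity) and
   c_{ab} is free of s; hence
   det M = prod_a N_a(s) V_a(s) * det c, and N_a(0) V_a(0) = 1 identifies
   det c with the value at s = 0. *)
From HB Require Import structures.
From mathcomp Require Import all_boot all_order all_algebra.
From mathcomp Require Import ring zify.
Set Implicit Arguments. Unset Strict Implicit. Unset Printing Implicit Defensive.
Import GRing.Theory.
Local Open Scope ring_scope.

Lemma qpoch0 (K : fieldType) (x b : K) : qpoch x b 0 = 1.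
Proof. by rewrite /qpoch big_ord0. Qed.

Lemma qpochS (K : fieldType) (x b : K) n :
  qpoch x b n.+1 = qpoch x b n * (1 - b ^+ n * x).
Proof. by rewrite /qpoch big_ord_recr. Qed.

Lemma det_unitrig (R : comNzRingType) n (A : 'M[R]_n) :
  (forall i j : 'I_n, (i < j)%N -> A i j = 0) -> (forall i, A i i = 1) ->
  \det A = 1.
Proof.
move=> A_trig A_diag; rewrite det_trig; last exact/is_trig_mxP.
by rewrite big1.
Qed.

Lemma prod_triangular (R : comNzRingType) (F : nat -> R) n :
  \prod_(a < n.+1) \prod_(j < a) F j = \prod_(j < n.+1) F j ^+ (n - j).
Proof.
elim: n => [|n IH]; first by rewrite !big_ord_recr !big_ord0 /= !mul1r.
rewrite big_ord_recr /= IH [RHS]big_ord_recr /= subnn expr0 mulr1 -big_split /=.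
apply: eq_bigr => j _; have le_jn : (j <= n)%N by rewrite -ltnS.
by rewrite (subSn le_jn) exprSr.
Qed.

Lemma sum_ord_double (R : nmodType) (F : nat -> R) m :
  \sum_(i < 2 * m) F i = \sum_(a < m) F (2 * a)%N + \sum_(a < m) F (2 * a).+1.
Proof.
elim: m => [|m IH]; first by rewrite muln0 !big_ord0 addr0.
by rewrite mulnS add2n !big_ord_recr /= IH -addrA addrACA.
Qed.

Section GaussianBinomial.
Variables (K : fieldType) (b : K).
Hypothesis b_nonroot : forall k, (0 < k)%N -> b ^+ k != 1.

Lemma qpoch_factor_neq0 j : 1 - b ^+ j * b != 0.
Proof. by rewrite subr_eq0 eq_sym -exprSr b_nonroot. Qed.

Lemma qpoch_neq0 n : qpoch b b n != 0.
Proof.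
elim: n => [|n IH]; first by rewrite qpoch0 oner_eq0.
by rewrite qpochS mulf_neq0 // qpoch_factor_neq0.
Qed.

Lemma qbinomE n i : (i <= n)%N ->
  qbinom b n i = qpoch b b n / (qpoch b b i * qpoch b b (n - i)).
Proof. by rewrite /qbinom => ->. Qed.

Lemma qbinom_small n i : (n < i)%N -> qbinom b n i = 0.
Proof. by move=> lt_ni; rewrite /qbinom leqNgt lt_ni. Qed.

Lemma qbinom0 n : qbinom b n 0 = 1.
Proof. by rewrite qbinomE // subn0 qpoch0 mul1r divff // qpoch_neq0. Qed.

Lemma qbinomnn n : qbinom b n n = 1.
Proof. by rewrite qbinomE // subnn qpoch0 mulr1 divff // qpoch_neq0. Qed.

Lemma qbinom_pascal_closed i k (P := qpoch b b) :
  [/\ qbinom b (i + k).+2 i.+1 = P (i + k).+2 / (P i.+1 * P k.+1),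
      qbinom b (i + k).+1 i = P (i + k).+1 / (P i * P k.+1)
    & qbinom b (i + k).+1 i.+1 = P (i + k).+1 / (P i.+1 * P k)].
Proof.
have e1 : ((i + k).+2 - i.+1 = k.+1)%N by lia.
have e2 : ((i + k).+1 - i = k.+1)%N by lia.
have e3 : ((i + k).+1 - i.+1 = k)%N by lia.
by rewrite !qbinomE ?e1 ?e2 ?e3 //; lia.
Qed.

Lemma qbinomS n i :
  qbinom b n.+1 i.+1 = qbinom b n i + b ^+ i.+1 * qbinom b n i.+1.
Proof.
case: (ltngtP i n) => [lt_in|lt_ni|->]; last 2 first.
- by rewrite !qbinom_small ?mulr0 ?addr0 // ltnW.
- by rewrite !qbinomnn qbinom_small // mulr0 addr0.
have [k ->] : exists k, n = (i + k).+1 by exists (n - i.+1)%N; lia.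
have [-> -> ->] := qbinom_pascal_closed i k; rewrite !qpochS !exprS !exprD.
have := qpoch_neq0 i; have := qpoch_neq0 k.
have := qpoch_factor_neq0 i; have := qpoch_factor_neq0 k.
move: (qpoch b b i) (qpoch b b k) (qpoch b b (i + k)) (b ^+ i) (b ^+ k).
by move=> Pi Pk Pik X Y fk fi nk ni; field; rewrite ni nk fi fk.
Qed.

Lemma qbinomS_dual n i :
  qbinom b n.+1 i.+1 = b ^+ (n - i) * qbinom b n i + qbinom b n i.+1.
Proof.
case: (ltngtP i n) => [lt_in|lt_ni|->]; last 2 first.
- by rewrite !qbinom_small ?mulr0 ?addr0 // ltnW.
- by rewrite !qbinomnn qbinom_small // subnn expr0 mul1r addr0.
have [k ->] : exists k, n = (i + k).+1 by exists (n - i.+1)%N; lia.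
have [-> -> ->] := qbinom_pascal_closed i k; rewrite !qpochS.
rewrite (_ : (i + k).+1 - i = k.+1)%N; last by lia.
rewrite !exprS !exprD.
have := qpoch_neq0 i; have := qpoch_neq0 k.
have := qpoch_factor_neq0 i; have := qpoch_factor_neq0 k.
move: (qpoch b b i) (qpoch b b k) (qpoch b b (i + k)) (b ^+ i) (b ^+ k).
by move=> Pi Pk Pik X Y fk fi nk ni; field; rewrite ni nk fi fk.
Qed.

Lemma qbinom_mul n l i : (i <= l)%N -> (l <= n)%N ->
  qbinom b n l * qbinom b l i = qbinom b n i * qbinom b (n - i) (l - i).
Proof.
move=> le_il le_ln.
rewrite (qbinomE le_ln) (qbinomE le_il) (qbinomE (leq_trans le_il le_ln)).
rewrite qbinomE; last by lia.
rewrite (_ : n - i - (l - i) = n - l)%N; last by lia.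
have := qpoch_neq0 i; have := qpoch_neq0 (l - i); have := qpoch_neq0 (n - l).
have := qpoch_neq0 l; have := qpoch_neq0 (n - i).
move: (qpoch b b i) (qpoch b b (l - i)) (qpoch b b (n - l)) (qpoch b b l).
move: (qpoch b b (n - i)) (qpoch b b n) => Pni Pn Pi Pli Pnl Pl.
by move=> h1 h2 h3 h4 h5; field; rewrite h1 h2 h3 h4 h5.
Qed.

Definition qbinom_altsum m := \sum_(u < m.+1) (-1) ^+ u * qbinom b m u.
Definition qbinom_altsumX m :=
  \sum_(u < m.+1) (-1) ^+ u * b ^+ u * qbinom b m u.

Lemma qbinom_altsumX_shift m :
  \sum_(u < m.+1) (-1) ^+ u * b ^+ u.+1 * qbinom b m u.+1
  = 1 - qbinom_altsumX m.
Proof.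
rewrite /qbinom_altsumX big_ord_recr /= qbinom_small // mulr0 addr0.
rewrite big_ord_recl /= expr0 !mul1r qbinom0 opprD addrA subrr add0r -sumrN.
apply: eq_bigr => u _; rewrite /bump /= add1n !exprS.
by move: ((-1) ^+ u) (b ^+ u) (qbinom b m u.+1) => x y z; ring.
Qed.

Lemma qbinom_altsumS m :
  qbinom_altsum m.+1 = qbinom_altsumX m - qbinom_altsum m.
Proof.
rewrite {1}/qbinom_altsum big_ord_recl /= expr0 mul1r qbinom0.
under eq_bigr => u _ do rewrite /bump /= add1n qbinomS exprS mulrDr.
rewrite big_split /=.
have -> : \sum_(u < m.+1) (-1 * (-1) ^+ u * qbinom b m u) = - qbinom_altsum m.
  by rewrite -sumrN; apply: eq_bigr => u _; rewrite mulN1r mulNr.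
have -> : \sum_(u < m.+1) (-1 * (-1) ^+ u * (b ^+ u.+1 * qbinom b m u.+1))
    = - (1 - qbinom_altsumX m).
  rewrite -qbinom_altsumX_shift -sumrN.
  by apply: eq_bigr => u _; rewrite mulN1r !mulNr mulrA.
by ring.
Qed.

Lemma qbinom_altsumXS m :
  qbinom_altsumX m.+1 = - b ^+ m.+1 * qbinom_altsum m + qbinom_altsumX m.
Proof.
rewrite {1}/qbinom_altsumX big_ord_recl /= expr0 !mul1r qbinom0.
have -> : \sum_(i < m.+1)
    (-1) ^+ bump 0 i * b ^+ bump 0 i * qbinom b m.+1 (bump 0 i)
  = - b ^+ m.+1 * qbinom_altsum m
    - \sum_(u < m.+1) (-1) ^+ u * b ^+ u.+1 * qbinom b m u.+1.
  rewrite /qbinom_altsum mulr_sumr -sumrN -big_split /=.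
  apply: eq_bigr => [[u lt_um]] _; rewrite /bump /= add1n qbinomS_dual !exprS.
  rewrite (_ : b ^+ m = b ^+ u * b ^+ (m - u)); last by rewrite -exprD subnKC.
  move: ((-1) ^+ u) (b ^+ u) (b ^+ (m - u)) (qbinom b m u) (qbinom b m u.+1).
  by move=> x y z w v; ring.
rewrite qbinom_altsumX_shift.
by move: (b ^+ m.+1) (qbinom_altsum m) (qbinom_altsumX m) => x y z; ring.
Qed.

Lemma qbinom_altsum0 : qbinom_altsum 0 = 1.
Proof. by rewrite /qbinom_altsum big_ord1 qbinom0 expr0 mul1r. Qed.

Lemma qbinom_altsumSS m :
  qbinom_altsum m.+2 = (1 - b ^+ m.+1) * qbinom_altsum m.
Proof. by rewrite qbinom_altsumS qbinom_altsumXS qbinom_altsumS; ring. Qed.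

Lemma qbinom_altsum_even k :
  qbinom_altsum (2 * k) = qpoch b (b ^+ 2) k.
Proof.
elim: k => [|k IH]; first by rewrite muln0 qbinom_altsum0 qpoch0.
by rewrite mulnS add2n qbinom_altsumSS IH qpochS -exprM -exprSr mulnC mulrC.
Qed.

Lemma qbinom_altsum_odd k : qbinom_altsum (2 * k).+1 = 0.
Proof.
elim: k => [|k IH].
  by rewrite /qbinom_altsum !big_ord_recl big_ord0 /= qbinom0 qbinomnn; ring.
by rewrite mulnS add2n qbinom_altsumSS IH mulr0.
Qed.

Definition qpochX (c : K) i : {poly K} := \prod_(k < i) ('X - (c * b ^+ k)%:P).

Lemma qpochXS c i : qpochX c i.+1 = qpochX c i * ('X - (c * b ^+ i)%:P).
Proof. by rewrite /qpochX big_ord_recr. Qed.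

(* The q-analogue of Newton's interpolation of x^l at the nodes c b^k. *)
Lemma polyXn_qpochX c l m : (l < m)%N ->
  'X^l = \sum_(i < m) (qbinom b l i * c ^+ (l - i)) *: qpochX c i.
Proof.
have X_qpochX i : 'X * qpochX c i = qpochX c i.+1 + (c * b ^+ i) *: qpochX c i.
  by rewrite qpochXS -mul_polyC; move: (qpochX c i) (_%:P) => x y; ring.
elim: l m => [|l IH] [|m] // lt_lm.
  rewrite big_ord_recl /= qbinom0 expr0 mulr1 scale1r /qpochX big_ord0.
  by rewrite big1 ?addr0 // => i _; rewrite qbinom_small // mul0r scale0r.
rewrite exprS (IH m.+1 (ltnW lt_lm)) mulr_sumr.
under eq_bigr => i _ do rewrite -scalerAr X_qpochX scalerDr scalerA.
rewrite big_split /= [X in X + _]big_ord_recr /= qbinom_small // mul0r.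
rewrite scale0r addr0 [X in _ + X]big_ord_recl /= [RHS]big_ord_recl /=.
rewrite !qbinom0 !subn0 expr0 !mulr1 addrCA mul1r -exprSr; congr (_ + _).
  by rewrite mul1r.
rewrite -big_split /=; apply: eq_bigr => i _.
rewrite /bump /= !add1n qbinomS -scalerDl subSS; congr (_ *: _).
case: (ltnP i l) => [lt_il|le_li]; last first.
  by rewrite (@qbinom_small l i.+1) ?ltnS // !mulr0 !mul0r !addr0.
rewrite (_ : l - i = (l - i.+1).+1)%N ?exprS; last by lia.
by move: (qbinom b l i) (qbinom b l i.+1) (c ^+ (l - i.+1)) (b ^+ i) => x y z w; ring.
Qed.

End GaussianBinomial.

Section MomentFunctional.
Variables (K : fieldType) (mu : nat -> K).

Definition momf (p : {poly K}) := \sum_(i < size p) p`_i * mu i.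

Lemma momf_widen N (p : {poly K}) : (size p <= N)%N ->
  momf p = \sum_(i < N) p`_i * mu i.
Proof.
move=> le_pN; rewrite /momf (big_ord_widen _ (fun i => p`_i * mu i) le_pN).
rewrite big_mkcond; apply: eq_bigr => i _; case: ifP => // /negbT.
by rewrite -leqNgt => le_pi; rewrite nth_default // mul0r.
Qed.

Lemma momfD p r : momf (p + r) = momf p + momf r.
Proof.
rewrite !(@momf_widen (maxn (size p) (size r))) ?leq_maxl ?leq_maxr ?size_polyD //.
by rewrite -big_split; apply: eq_bigr => i _; rewrite coefD mulrDl.
Qed.

Lemma momfZ c p : momf (c *: p) = c * momf p.
Proof.
rewrite (@momf_widen (size p)) ?size_scale_leq // /momf mulr_sumr.
by apply: eq_bigr => i _; rewrite coefZ mulrA.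
Qed.

Lemma momf_sum m (F : 'I_m -> {poly K}) :
  momf (\sum_(i < m) F i) = \sum_(i < m) momf (F i).
Proof.
elim: m F => [|m IH] F; first by rewrite !big_ord0 /momf size_poly0 big_ord0.
by rewrite !big_ord_recr /= momfD IH.
Qed.

Lemma momfXn r : momf 'X^r = mu r.
Proof.
rewrite /momf size_polyXn big_ord_recr /= big1 ?add0r.
  by rewrite coefXn eqxx mul1r.
by move=> i _; rewrite coefXn (ltn_eqF (ltn_ord i)) mul0r.
Qed.

End MomentFunctional.

Section Moments.
Variables (K : fieldType) (q : K).
Hypothesis q_nonroot : forall k, (0 < k)%N -> q ^+ k != 1.

Lemma sqr_nonroot k : (0 < k)%N -> (q ^+ 2) ^+ k != 1.
Proof. by move=> k_gt0; rewrite -exprM q_nonroot // muln_gt0 k_gt0. Qed.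

Definition qfall i (s : K) := \prod_(k < i) (s - q ^+ k).
Definition Fnum n (s : K) := \sum_(l < n.+1) (- s) ^+ l * qbinom q n l.
Definition qpoch_odd m := qpoch q (q ^+ 2) m.
Definition spoch (e a : nat) (s : K) := \prod_(t < 2 * a) (s - q ^+ (t + e)).
Definition moment (e r : nat) (s : K) :=
  \sum_(a < r.+1) qbinom (q ^+ 2) r a * spoch e a s / qpoch_odd (a + e).

Lemma expr_qfall l m s : (l < m)%N ->
  s ^+ l = \sum_(i < m) qbinom q l i * qfall i s.
Proof.
move=> lt_lm; have := congr1 (horner^~ s) (polyXn_qpochX q_nonroot 1 lt_lm).
rewrite hornerXn => ->; rewrite horner_sum; apply: eq_bigr => i _.
rewrite hornerZ expr1n mulr1 /qpochX horner_prod; congr (_ * _).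
by apply: eq_bigr => k _; rewrite hornerXsubC mul1r.
Qed.

Lemma sum_qbinom_mul n (i : 'I_n.+1) :
  \sum_(l < n.+1) (-1) ^+ l * qbinom q n l * qbinom q l i
  = (-1) ^+ i * qbinom q n i * qbinom_altsum q (n - i).
Proof.
rewrite -(big_mkord xpredT (fun l => (-1) ^+ l * qbinom q n l * qbinom q l i)).
rewrite (@big_cat_nat _ _ _ i) //=; last exact: ltnW.
rewrite big_nat_cond big1 ?add0r; last first.
  by move=> l /andP [/andP [_ lt_li] _]; rewrite (qbinom_small _ lt_li) mulr0.
rewrite -{1}(add0n i) big_addn big_mkord /qbinom_altsum mulr_sumr.
rewrite (_ : n.+1 - i = (n - i).+1)%N; last by rewrite subSn // -ltnS.
apply: eq_bigr => u _; have := ltn_ord u; have := ltn_ord i => lt_in lt_u.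
rewrite -mulrA qbinom_mul //; try lia.
rewrite addnK exprD.
by move: ((-1) ^+ u) ((-1) ^+ i) (qbinom q n i) (qbinom q (n - i) u) => x y z w; ring.
Qed.

Lemma Fnum_qfall n s :
  Fnum n s = \sum_(i < n.+1)
    (-1) ^+ i * qbinom q n i * qbinom_altsum q (n - i) * qfall i s.
Proof.
transitivity (\sum_(l < n.+1) \sum_(i < n.+1)
    (-1) ^+ l * qbinom q n l * qbinom q l i * qfall i s).
  apply: eq_bigr => l _.
  rewrite -[- s]mulN1r exprMn (expr_qfall s (ltn_ord l)) mulr_sumr mulr_suml.
  apply: eq_bigr => i _.
  by move: ((-1) ^+ l) (qbinom q n l) (qbinom q l i) (qfall i s) => x y z w; ring.
rewrite exchange_big /=; apply: eq_bigr => i _.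
by rewrite -sum_qbinom_mul mulr_suml.
Qed.

Lemma qpoch_odd_neq0 m : qpoch_odd m != 0.
Proof.
elim: m => [|m IH]; first by rewrite /qpoch_odd qpoch0 oner_eq0.
by rewrite /qpoch_odd qpochS mulf_neq0 // subr_eq0 eq_sym -exprM -exprSr q_nonroot.
Qed.

Lemma qpoch_oddS m : qpoch_odd m.+1 = qpoch_odd m * (1 - q ^+ (2 * m) * q).
Proof. by rewrite /qpoch_odd qpochS -exprM. Qed.

Lemma qpoch_even_split m :
  qpoch q q (2 * m) = qpoch_odd m * qpoch (q ^+ 2) (q ^+ 2) m.
Proof.
elim: m => [|m IH]; first by rewrite muln0 /qpoch_odd !qpoch0 mulr1.
rewrite mulnS add2n !qpochS IH qpoch_oddS -exprM [q ^+ (2 * m).+1]exprSr expr2.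
by move: (qpoch_odd m) (qpoch (q ^+ 2) (q ^+ 2) m) (q ^+ (2 * m)) => x y z; ring.
Qed.

Lemma qpoch_odd_split m :
  qpoch q q (2 * m).+1 = qpoch_odd m.+1 * qpoch (q ^+ 2) (q ^+ 2) m.
Proof.
rewrite qpochS qpoch_even_split qpoch_oddS -exprSr.
by move: (qpoch_odd m) (qpoch (q ^+ 2) (q ^+ 2) m) => x y; ring.
Qed.

Lemma qfall_even a s : qfall (2 * a) s = spoch 0 a s.
Proof. by apply: eq_bigr => t _; rewrite addn0. Qed.

Lemma qfall_odd a s : qfall (2 * a).+1 s = (s - 1) * spoch 1 a s.
Proof.
rewrite /qfall big_ord_recl expr0; congr (_ * _).
by apply: eq_bigr => t _; rewrite lift0 addn1.
Qed.

Lemma sign_even a : (-1) ^+ (2 * a) = 1 :> K.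
Proof. by rewrite exprM sqrrN !expr1n. Qed.

Lemma Fnum_even r s : Fnum (2 * r) s =
  \sum_(a < r.+1) qbinom q (2 * r) (2 * a) * qpoch_odd (r - a) * spoch 0 a s.
Proof.
rewrite Fnum_qfall big_ord_recr /= (sum_ord_double (fun i => (-1) ^+ i
  * qbinom q (2 * r) i * qbinom_altsum q (2 * r - i) * qfall i s)) big_ord_recr /=.
rewrite [X in _ + X + _]big1 ?addr0; last first.
  move=> [a lt_ar] _ /=.
  rewrite (_ : 2 * r - (2 * a).+1 = (2 * (r - a.+1)).+1)%N; last by lia.
  by rewrite qbinom_altsum_odd // mulr0 mul0r.
congr (_ + _); last first.
  by rewrite !subnn sign_even mul1r qbinom_altsum0 // qfall_even /qpoch_odd qpoch0.
apply: eq_bigr => [[a lt_ar]] _ /=.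
rewrite (_ : 2 * r - 2 * a = 2 * (r - a))%N; last by lia.
by rewrite sign_even mul1r qbinom_altsum_even // qfall_even.
Qed.

Lemma Fnum_odd r s : Fnum (2 * r).+1 s = (1 - s) *
  \sum_(a < r.+1) qbinom q (2 * r).+1 (2 * a).+1 * qpoch_odd (r - a) * spoch 1 a s.
Proof.
rewrite Fnum_qfall (_ : (2 * r).+2 = 2 * r.+1)%N; last by lia.
rewrite (sum_ord_double (fun i => (-1) ^+ i * qbinom q (2 * r).+1 i
  * qbinom_altsum q ((2 * r).+1 - i) * qfall i s)) [X in X + _]big1 ?add0r; last first.
  move=> [a lt_ar] _ /=.
  rewrite (_ : (2 * r).+1 - 2 * a = (2 * (r - a)).+1)%N; last by lia.
  by rewrite qbinom_altsum_odd // mulr0 mul0r.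
rewrite mulr_sumr; apply: eq_bigr => [[a lt_ar]] _ /=.
rewrite (_ : (2 * r).+1 - (2 * a).+1 = 2 * (r - a))%N; last by lia.
rewrite qbinom_altsum_even // qfall_odd exprS sign_even mulr1 /qpoch_odd.
move: (qbinom q (2 * r).+1 (2 * a).+1) (qpoch q (q ^+ 2) (r - a)) (spoch 1 a s).
by move=> x y z; ring.
Qed.

Lemma qbinom_even r a : (a <= r)%N ->
  qbinom q (2 * r) (2 * a) * qpoch_odd (r - a) / qpoch_odd r
  = qbinom (q ^+ 2) r a / qpoch_odd a.
Proof.
move=> le_ar; rewrite !qbinomE //; try lia.
rewrite (_ : 2 * r - 2 * a = 2 * (r - a))%N; last by lia.
rewrite !qpoch_even_split.
have := qpoch_odd_neq0 r; have := qpoch_odd_neq0 a; have := qpoch_odd_neq0 (r - a).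
have := qpoch_neq0 sqr_nonroot a; have := qpoch_neq0 sqr_nonroot (r - a).
move: (qpoch_odd r) (qpoch_odd a) (qpoch_odd (r - a)) (qpoch (q ^+ 2) (q ^+ 2) r).
move: (qpoch (q ^+ 2) (q ^+ 2) a) (qpoch (q ^+ 2) (q ^+ 2) (r - a)).
by move=> x6 x5 x4 x3 x2 x1 h6 h5 h3 h2 h1; field; rewrite h1 h2 h3 h5 h6.
Qed.

Lemma qbinom_odd r a : (a <= r)%N ->
  qbinom q (2 * r).+1 (2 * a).+1 * qpoch_odd (r - a) / qpoch_odd r.+1
  = qbinom (q ^+ 2) r a / qpoch_odd a.+1.
Proof.
move=> le_ar; rewrite !qbinomE //; try lia.
rewrite (_ : (2 * r).+1 - (2 * a).+1 = 2 * (r - a))%N; last by lia.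
rewrite qpoch_even_split !qpoch_odd_split.
have := qpoch_odd_neq0 r.+1; have := qpoch_odd_neq0 a.+1.
have := qpoch_odd_neq0 (r - a).
have := qpoch_neq0 sqr_nonroot a; have := qpoch_neq0 sqr_nonroot (r - a).
move: (qpoch_odd r.+1) (qpoch_odd a.+1) (qpoch_odd (r - a)).
move: (qpoch (q ^+ 2) (q ^+ 2) r) (qpoch (q ^+ 2) (q ^+ 2) a).
move: (qpoch (q ^+ 2) (q ^+ 2) (r - a)).
by move=> x6 x5 x4 x3 x2 x1 h6 h5 h3 h2 h1; field; rewrite h1 h2 h3 h5 h6.
Qed.

Lemma Ffun_even r s : Ffun (2 * r) s q = moment 0 r s.
Proof.
rewrite /Ffun -/(Fnum (2 * r) s) (_ : (2 * r).+1./2 = r)%N; last first.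
  by rewrite mul2n; exact: uphalf_double.
rewrite -/(qpoch_odd r) Fnum_even mulr_suml /moment.
apply: eq_bigr => [[a lt_ar]] _ /=.
rewrite addn0 [RHS]mulrAC -qbinom_even; last by rewrite -ltnS.
have := qpoch_odd_neq0 r.
move: (qbinom q (2 * r) (2 * a)) (qpoch_odd (r - a)) (qpoch_odd r) (spoch 0 a s).
by move=> x y z w h; field.
Qed.

Lemma Ffun_odd r s : Ffun (2 * r).+1 s q = (1 - s) * moment 1 r s.
Proof.
rewrite /Ffun -/(Fnum (2 * r).+1 s) (_ : (2 * r).+2./2 = r.+1)%N; last first.
  by rewrite (_ : (2 * r).+2 = 2 * r.+1)%N ?mul2n ?half_double //; lia.
rewrite -/(qpoch_odd r.+1) Fnum_odd -mulrA; congr (_ * _).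
rewrite mulr_suml /moment; apply: eq_bigr => [[a lt_ar]] _ /=.
rewrite addn1 [RHS]mulrAC -qbinom_odd; last by rewrite -ltnS.
have := qpoch_odd_neq0 r.+1.
move: (qbinom q (2 * r).+1 (2 * a).+1) (qpoch_odd (r - a)) (qpoch_odd r.+1).
by move: (spoch 1 a s) => w x y z h; field.
Qed.

End Moments.

Lemma mul_sumsZ (R : comNzRingType) (A : algType R) m
    (al be : 'I_m -> R) (P P' : 'I_m -> A) :
  (\sum_(a < m) al a *: P a) * (\sum_(b < m) be b *: P' b) =
  \sum_(a < m) \sum_(b < m) (al a * be b) *: (P a * P' b).
Proof.
rewrite mulr_suml; apply: eq_bigr => a _; rewrite mulr_sumr.
by apply: eq_bigr => b _; rewrite -scalerAl -scalerAr scalerA.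
Qed.

Section HankelDeterminant.
Variables (K : fieldType) (q : K).
Hypotheses (q_nonroot : forall k, (0 < k)%N -> q ^+ k != 1) (q_neq0 : q != 0).
Variables (e : nat) (s : K).

Local Notation Q := (q ^+ 2).
Local Notation L := (momf (fun r => moment q e r s)).

Definition Pbasis a := qpochX Q 1 a.
Definition Qbasis b := qpochX Q (s ^+ 2) b.

(* [x^a] is [Pbasis a] plus lower [Pbasis] terms, with the same q^2-binomial
   coefficients as in [moment]; induction on [a] peels them off. *)
Lemma momf_Pbasis a : L (Pbasis a) = spoch q e a s / qpoch_odd q (a + e).
Proof.
elim/ltn_ind: a => a IH; have := momfXn (fun r => moment q e r s) a.
rewrite (polyXn_qpochX (sqr_nonroot q_nonroot) 1 (ltnSn a)) momf_sum /moment.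
rewrite big_ord_recr /= [RHS]big_ord_recr /=.
under eq_bigr => i _ do rewrite momfZ expr1n mulr1 -/(Pbasis i) IH // mulrA.
by rewrite momfZ expr1n mulr1 !(qbinomnn (sqr_nonroot q_nonroot)) !mul1r => /addrI.
Qed.

Definition gram a b := L (Pbasis a * Qbasis b).

Lemma gramS a b : gram a.+1 b = gram a b.+1 + (s ^+ 2 * Q ^+ b - Q ^+ a) * gram a b.
Proof.
rewrite /gram -momfZ -momfD /Pbasis /Qbasis !qpochXS mul1r; congr (L _).
rewrite -mul_polyC polyCB.
by move: (qpochX _ _ a) (qpochX _ _ b) (_%:P) (_%:P) => x y z w; ring.
Qed.

Definition spoch_inv b := \prod_(t < 2 * b) (s - 1 / q ^+ (t + e)).
Definition gram_coef a b :=
  q ^+ (2 * a * b + 2 * b * b + 2 * e * b) / q ^+ b / qpoch_odd q (a + b + e).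
Definition gram_closed a b := gram_coef a b * spoch q e a s * spoch_inv b.

Lemma spochS a : spoch q e a.+1 s =
  spoch q e a s * (s - q ^+ (2 * a + e)) * (s - q ^+ (2 * a + e) * q).
Proof. by rewrite /spoch mulnS add2n !big_ord_recr /= addSn exprSr. Qed.

Lemma spoch_invS b : spoch_inv b.+1 =
  spoch_inv b * (s - 1 / q ^+ (2 * b + e)) * (s - 1 / (q ^+ (2 * b + e) * q)).
Proof. by rewrite /spoch_inv mulnS add2n !big_ord_recr /= addSn exprSr. Qed.

Lemma gram_closedS a b : gram_closed a.+1 b =
  gram_closed a b.+1 + (s ^+ 2 * Q ^+ b - Q ^+ a) * gram_closed a b.
Proof.
rewrite /gram_closed /gram_coef spochS spoch_invS.
rewrite (_ : a.+1 + b + e = (a + b + e).+1)%N; last by lia.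
rewrite (_ : a + b.+1 + e = (a + b + e).+1)%N ?qpoch_oddS; last by lia.
set m := (a + b + e)%N; set P := q ^+ (2 * a * b + 2 * b * b + 2 * e * b).
have sqrX k : Q ^+ k = q ^+ k * q ^+ k by rewrite -exprM mulnC exprM expr2.
have -> : q ^+ (2 * a.+1 * b + 2 * b * b + 2 * e * b) = P * q ^+ b * q ^+ b.
  by rewrite -!exprD; congr (_ ^+ _); lia.
have -> : q ^+ (2 * a * b.+1 + 2 * b.+1 * b.+1 + 2 * e * b.+1) = P * q ^+ a
    * q ^+ a * q ^+ b * q ^+ b * q ^+ b * q ^+ b * q ^+ e * q ^+ e * q * q.
  by rewrite -!exprD -exprSr -exprSr; congr (_ ^+ _); lia.
have -> : q ^+ (2 * a + e) = q ^+ a * q ^+ a * q ^+ e.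
  by rewrite -!exprD; congr (_ ^+ _); lia.
have -> : q ^+ (2 * b + e) = q ^+ b * q ^+ b * q ^+ e.
  by rewrite -!exprD; congr (_ ^+ _); lia.
have Em : q ^+ (2 * m) = q ^+ a * q ^+ a * q ^+ b * q ^+ b * q ^+ e * q ^+ e.
  by rewrite -!exprD; congr (_ ^+ _); rewrite /m; lia.
rewrite Em !sqrX (exprS q b).
have := qpoch_odd_neq0 q_nonroot m.+1; rewrite qpoch_oddS Em mulf_eq0 negb_or.
case/andP; have := expf_neq0 a q_neq0; have := expf_neq0 b q_neq0.
have := expf_neq0 e q_neq0.
move: P (q ^+ a) (q ^+ b) (q ^+ e) (qpoch_odd q m) (spoch q e a s) (spoch_inv b).
by move=> P A B E X N V hE hB hA h1 h2; field; rewrite h1 h2 hB hE q_neq0.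
Qed.

(* Both sides satisfy the recurrence of [gramS] in [a], which determines them
   from their values at [b = 0]. *)
Lemma gramE a b : gram a b = gram_closed a b.
Proof.
elim: b a => [|b IH] a.
  rewrite /gram /Qbasis /qpochX big_ord0 mulr1 momf_Pbasis /gram_closed.
  rewrite /gram_coef /spoch_inv big_ord0 !muln0 !addn0 expr0 divr1 mulr1 mul1r.
  by rewrite mulrC.
by have := gramS a b; rewrite !IH gram_closedS => /addIr.
Qed.

Definition sfactor j := (s - q ^+ (2 * j + e)) * (s - q ^+ (2 * j + e) * q)
  * (s - 1 / q ^+ (2 * j + e)) * (s - 1 / (q ^+ (2 * j + e) * q)).

Lemma spoch_mul_inv a : spoch q e a s * spoch_inv a = \prod_(j < a) sfactor j.
Proof.
elim: a => [|a IH]; first by rewrite /spoch /spoch_inv muln0 !big_ord0 mulr1.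
rewrite spochS spoch_invS big_ord_recr /= -IH /sfactor.
by move: (spoch q e a s) (spoch_inv a) (q ^+ (2 * a + e)) => x y z; ring.
Qed.

Variable n : nat.

Definition gram_coef_mx := \matrix_(a < n.+1, b < n.+1) gram_coef a b.

Lemma hankel_factor :
  \matrix_(i < n.+1, j < n.+1) moment q e (i + j) s =
  \matrix_(r < n.+1, a < n.+1) qbinom Q r a *m \matrix_(a, b) gram a b
  *m (\matrix_(t < n.+1, b < n.+1) (qbinom Q t b * (s ^+ 2) ^+ (t - b)))^T.
Proof.
apply/matrixP => r t; rewrite !mxE.
transitivity (L ('X^r * 'X^t)); first by rewrite -exprD momfXn.
rewrite (polyXn_qpochX (sqr_nonroot q_nonroot) 1 (ltn_ord r)).
rewrite (polyXn_qpochX (sqr_nonroot q_nonroot) (s ^+ 2) (ltn_ord t)).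
rewrite mul_sumsZ momf_sum; under eq_bigr => a _ do rewrite momf_sum.
under [RHS]eq_bigr => b _ do rewrite !mxE mulr_suml.
rewrite [RHS]exchange_big /=; apply: eq_bigr => a _; apply: eq_bigr => b _.
rewrite momfZ !mxE expr1n mulr1 -/(Pbasis a) -/(Qbasis b) -/(gram a b).
by move: (qbinom Q r a) (_ * _ ^+ (t - b)) (gram a b) => x y z; ring.
Qed.

Lemma det_hankel :
  \det (\matrix_(i < n.+1, j < n.+1) moment q e (i + j) s) =
  \prod_(j < n.+1) sfactor j ^+ (n - j) * \det gram_coef_mx.
Proof.
have Q_nonroot := sqr_nonroot q_nonroot.
have gram_mx_factor : \matrix_(a < n.+1, b < n.+1) gram a b =
    diag_mx (\row_a spoch q e a s) *m gram_coef_mx *m diag_mx (\row_b spoch_inv b).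
  apply/matrixP => a b; rewrite mul_mx_diag mul_diag_mx !mxE gramE.
  by rewrite /gram_closed [gram_coef a b * _]mulrC.
have det_qbinom : \det (\matrix_(r < n.+1, a < n.+1) qbinom Q r a) = 1.
  by apply: det_unitrig => [i j lt_ij|i]; rewrite mxE ?(qbinom_small _ lt_ij) ?qbinomnn.
have det_qbinom_sqr : \det (\matrix_(t < n.+1, b < n.+1)
    (qbinom Q t b * (s ^+ 2) ^+ (t - b))) = 1.
  apply: det_unitrig => [i j lt_ij|i]; rewrite mxE.
    by rewrite qbinom_small ?mul0r.
  by rewrite qbinomnn // subnn expr0 mulr1.
rewrite hankel_factor !det_mulmx det_tr det_qbinom det_qbinom_sqr mul1r mulr1.
rewrite gram_mx_factor !det_mulmx !det_diag.
rewrite -prod_triangular; under [in RHS]eq_bigr => a _ do rewrite -spoch_mul_inv.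
rewrite big_split /=; under eq_bigr => i _ do rewrite mxE.
under [X in _ * _ * X]eq_bigr => i _ do rewrite mxE.
by rewrite mulrAC.
Qed.

End HankelDeterminant.

Section HankelFactorization.
Variables (K : fieldType) (q : K).
Hypotheses (q_nonroot : forall k, (0 < k)%N -> q ^+ k != 1) (q_neq0 : q != 0).

Lemma sfactor_at0 e j : sfactor q e 0 j = 1.
Proof.
rewrite /sfactor; have := expf_neq0 (2 * j + e) q_neq0.
by move: (q ^+ (2 * j + e)) => x x_neq0; field; rewrite x_neq0 q_neq0.
Qed.

Lemma det_hankel_at0 e n :
  \det (\matrix_(i < n.+1, j < n.+1) moment q e (i + j) 0) = \det (gram_coef_mx q e n).
Proof.
rewrite det_hankel // big1 ?mul1r // => j _.
by rewrite sfactor_at0 expr1n.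
Qed.

Lemma D0_factor n s :
  D0 n s q = D0 n 0 q * \prod_(j < n.+1) sfactor q 0 s j ^+ (n - j).
Proof.
have D0_hankel t :
    D0 n t q = \det (\matrix_(i < n.+1, j < n.+1) moment q 0 (i + j) t).
  by rewrite /D0; congr (\det _); apply/matrixP => i j; rewrite !mxE -mulnDr Ffun_even.
by rewrite !D0_hankel det_hankel_at0 det_hankel // mulrC.
Qed.

Lemma D1_factor n s :
  D1 n s q = D1 n 0 q * (1 - s) ^+ n.+1 * \prod_(j < n.+1) sfactor q 1 s j ^+ (n - j).
Proof.
have D1_hankel t :
    D1 n t q = (1 - t) ^+ n.+1 *
      \det (\matrix_(i < n.+1, j < n.+1) moment q 1 (i + j) t).
  rewrite /D1 -detZ; congr (\det _); apply/matrixP => i j.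
  by rewrite !mxE -mulnDr addn1 Ffun_odd.
rewrite !D1_hankel det_hankel_at0 det_hankel // subr0 expr1n mul1r.
by move: (\prod_(j < n.+1) _) (\det _) ((1 - s) ^+ n.+1) => x y z; ring.
Qed.

End HankelFactorization.

Lemma qvarX k : qvar ^+ k = tofrac ((tofrac ('X^k : {poly rat}) : Kq)%:P).
Proof. by rewrite /qvar -!rmorphXn. Qed.

Lemma qvar_nonroot k : (0 < k)%N -> qvar ^+ k != 1.
Proof.
move=> k_gt0; rewrite qvarX -tofrac1 tofrac_eq -polyC1 (inj_eq polyC_inj).
rewrite -tofrac1 tofrac_eq; apply/eqP => /(congr1 (size : {poly rat} -> nat)).
by rewrite size_polyXn size_poly1; case: k k_gt0.
Qed.

Lemma qvar_neq0 : qvar != 0.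
Proof. by rewrite -[qvar]expr1 qvarX !tofrac_eq0 polyC_eq0 tofrac_eq0 polyX_eq0. Qed.

Theorem theorem3p2 (n : nat) :
  D0 n svar qvar =
    D0 n 0 qvar *
    \prod_(j < n.+1)
      ((svar - qvar ^+ (2 * j)) * (svar - qvar ^+ (2 * j).+1)
       * (svar - 1 / qvar ^+ (2 * j)) * (svar - 1 / qvar ^+ (2 * j).+1))
        ^+ (n - j)
  /\
  D1 n svar qvar =
    D1 n 0 qvar * (1 - svar) ^+ n.+1 *
    \prod_(j < n.+1)
      ((svar - qvar ^+ (2 * j).+2) * (svar - qvar ^+ (2 * j).+1)
       * (svar - 1 / qvar ^+ (2 * j).+2) * (svar - 1 / qvar ^+ (2 * j).+1))
        ^+ (n - j).
Proof.
have [D0E D1E] := (D0_factor qvar_nonroot qvar_neq0 n svar,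
                   D1_factor qvar_nonroot qvar_neq0 n svar).
split; [rewrite D0E | rewrite D1E]; congr (_ * _); apply: eq_bigr => j _.
  by rewrite /sfactor addn0 -!exprSr.
rewrite /sfactor addn1 -!exprSr.
by move: (qvar ^+ (2 * j).+1) (qvar ^+ (2 * j).+2) => x y; congr (_ ^+ _); ring.
Qed.
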